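(* There exists a nonempty tree-shift of finite type containing no periodic tree. For example, take $\mathcal{A}=\{0,1\}$, $A_0=\begin{pmatrix}0&1\\1&0\end{pmatrix}$ and $A_1=\begin{pmatrix}1&0\\0&1\end{pmatrix}$. Then $\mathsf{X}_{A_0,A_1}$ is nonempty and contains no periodic tree.
   Context: $\Sigma=\{0,1\}$ and $\Sigma^*$ is the set of finite words, with $\epsilon$ the empty word. A tree is a map $t:\Sigma^*\to\mathcal{A}$, and we write $t_x=t(x)$. For a word $w$, the shift $\sigma_w$ is defined by $(\sigma_w t)_x=t_{wx}$. A pattern is a map defined on a finite prefix-closed subset of $\Sigma^*$. $\mathsf{X}_{\mathcal{F}}$ is the set of trees in which no pattern of $\mathcal{F}$ occurs at any node. A tree-shift of finite type is $\mathsf{X}_{\mathcal{F}}$ with $\mathcal{F}$ finite. The vertex tree-shift is $\mathsf{X}_{A_0,A_1}=\{t: A_0(t_x,t_{x0})=1,\ A_1(t_x,t_{x1})=1\ \forall x\in\Sigma^*\}$; it is a tree-shift of finite type. A complete prefix code (CPC) is a finite set $P\subseteq\Sigma^*\setminus\{\epsilon\}$ such that no word of $P$ is a prefix of another word of $P$, and every $x\in\Sigma^*$ with $|x|\ge\max_{y\in P}|y|$ has a prefix in $P$. A tree $t\in X$ is periodic if there is a CPC $P$ with $\sigma_x t=t$ for all $x\in P$. *)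

From Stdlib Require List.
From mathcomp Require Import all_boot.
Set Implicit Arguments. Unset Strict Implicit. Unset Printing Implicit Defensive.

(* Sigma = {0,1} is encoded as bool (false = 0, true = 1); words are seq bool,
   the empty word is [::]. *)
Definition word := seq bool.

Definition tree (A : Type) := word -> A.

Definition shift (A : Type) (w : word) (t : tree A) : tree A :=
  fun x => t (w ++ x).

(* A pattern: a map defined on a finite prefix-closed subset of Sigma^*.
   The domain is the finite list pdom; values outside pdom are irrelevant. *)
Record pattern (A : Type) := Pattern {
  pdom : seq word;
  pval : word -> A;
  pdom_prefix_closed : forall u v : word, (u ++ v) \in pdom -> u \in pdom
}.

Definition occurs_at (A : Type) (p : pattern A) (t : tree A) (x : word) : Prop :=
  forall y, y \in pdom p -> t (x ++ y) = pval p y.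

Definition in_XF (A : Type) (F : seq (pattern A)) (t : tree A) : Prop :=
  forall p, List.In p F -> forall x : word, ~ occurs_at p t x.

Definition is_CPC (P : seq word) : Prop :=
  [/\ (forall y, y \in P -> y <> [::]),
      (forall y z, y \in P -> z \in P -> prefix y z -> y = z) &
      (forall x : word, \max_(y <- P) size y <= size x ->
         exists2 y, y \in P & prefix y x)].

Definition periodic (A : Type) (t : tree A) : Prop :=
  exists P : seq word, is_CPC P /\ forall x, x \in P -> shift x t = t.

(* In the vertex shift with A0 = "different" and A1 = "equal", a label flips
   exactly along 0-edges, so t_x = t_eps (+) (parity of the number of 0s in x).
   Every complete prefix code contains a word 0 1^k, whose label is the
   negation of the root label; hence the shift by that word cannot fix t. *)

From mathcomp Require Import all_boot.

Set Implicit Arguments.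
Unset Strict Implicit.
Unset Printing Implicit Defensive.

Lemma In_map (T U : Type) (f : T -> U) (s : seq T) (y : U) :
  List.In y (map f s) <-> exists2 x, List.In x s & y = f x.
Proof.
elim: s y => [|x s IHs] y /=; first by split=> // -[].
split=> [[<- | /IHs[z zs ->]] | [z [<- | zs] ->]].
- by exists x; [left |].
- by exists z; [right |].
- by left.
- by right; apply/IHs; exists z.
Qed.

Lemma InP (T : eqType) (x : T) (s : seq T) : reflect (List.In x s) (x \in s).
Proof.
elim: s => [|y s IHs]; first by right.
by rewrite inE; apply: (iffP orP) => [[/eqP-> | /IHs] | [-> | /IHs]];
  by [left | right].
Qed.

Lemma cpc_mem_cons_nseq (P : seq word) (c d : bool) :
  is_CPC P -> exists k, c :: nseq k d \in P.
Proof.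
case=> P_nonempty _ P_complete.
set N := \max_(y <- P) size y.
have [|y yP] := P_complete (c :: nseq N d); first by rewrite /= size_nseq.
have y_short : size y <= N by apply: leq_bigmax_seq.
rewrite prefixE => /eqP.
case: y yP y_short => [/P_nonempty // | a y] yP /ltnW y_short /= [a_c def_y].
by exists (size y); rewrite -(take_nseq d y_short) def_y a_c.
Qed.

Section VertexShift.

Variables (A : finType) (E : bool -> rel A).

Definition edge_dom (c : bool) : seq word := [:: [::]; [:: c]].

Lemma edge_dom_prefix_closed c (u v : word) :
  u ++ v \in edge_dom c -> u \in edge_dom c.
Proof.
rewrite !inE; case: u => [|a [|b u]] //=; case: v => [|e v] //=;
  by rewrite ?eqseq_cons ?andbF ?andbT ?orbF.
Qed.

Definition edge_pattern (e : bool * A * A) : pattern A :=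
  let: (c, a, b) := e in
  Pattern (fun w => if w == [::] then a else b) (@edge_dom_prefix_closed c).

Definition vertex_patterns : seq (pattern A) :=
  [seq edge_pattern e | e <- enum [pred e : bool * A * A | ~~ E e.1.1 e.1.2 e.2]].

Lemma edge_pattern_occurs c (t : tree A) x :
  occurs_at (edge_pattern (c, t x, t (x ++ [:: c]))) t x.
Proof. by move=> y; rewrite !inE => /orP[] /eqP-> /=; rewrite ?cats0. Qed.

Lemma in_vertex_shiftP (t : tree A) :
  in_XF vertex_patterns t <-> forall x c, E c (t x) (t (x ++ [:: c])).
Proof.
split=> [t_ok x c | t_ok p /In_map [[[c a] b] /InP forbidden ->] x occ].
  apply/negPn/negP => not_edge.
  apply: (t_ok _ _ x (@edge_pattern_occurs c t x)).
  apply/In_map; exists (c, t x, t (x ++ [:: c])) => //.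
  by apply/InP; rewrite mem_enum.
move: forbidden; rewrite mem_enum inE /=.
have := occ [::] (mem_head _ _); have := occ [:: c] (mem_last _ [:: [:: c]]).
by rewrite /= cats0 => <- <-; rewrite t_ok.
Qed.

End VertexShift.

Definition A0 : rel bool := fun a b => a != b.
Definition A1 : rel bool := eq_op.

Definition parity_patterns : seq (pattern bool) :=
  vertex_patterns (fun c : bool => if c then A1 else A0).

Lemma parity_shiftP (t : tree bool) :
  in_XF parity_patterns t <-> forall x, t x = t [::] (+) odd (count negb x).
Proof.
rewrite in_vertex_shiftP; split=> [t_ok | t_val x c].
- elim/last_ind => [|x c IHx]; first by rewrite addbF.
  have := t_ok x c; rewrite -cats1 count_cat IHx /A0 /A1.
  case: c => /=; rewrite ?negb_eqb; [move/eqP <- | move/addbP <-];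
    by rewrite !addn0 ?addn1 ?oddS ?addbN.
- rewrite (t_val x) (t_val (x ++ _)) count_cat /A0 /A1.
  by case: c => /=; rewrite !addn0 ?addn1 ?oddS ?addbN //; case: (_ (+) _).
Qed.

Theorem theorem3p3 :
  exists (A : finType) (F : seq (pattern A)),
    (exists t : tree A, in_XF F t) /\
    (forall t : tree A, in_XF F t -> ~ periodic t).
Proof.
exists bool, parity_patterns; split.
  by exists (fun x => odd (count negb x)); apply/parity_shiftP.
move=> t /parity_shiftP t_val [P [P_cpc P_fixes]].
have [k kP] := cpc_mem_cons_nseq false true P_cpc.
have := congr1 (fun u : tree bool => u [::]) (P_fixes _ kP).
rewrite /shift cats0 t_val /= count_nseq mul0n addn0 addbT.
by case: (t [::]).
Qed.
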